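(* For every boosted instance $I=(G,t,t^* )$ and every boost action $B=(q,\tau)$ with $\tau\ge t^*_q$, $\mathrm{Loss}(I,B)\le\tau$.
   Context: $G=(V,E,c)$ is an undirected graph with edge costs $c\ge0$; $\delta(S)$ denotes the edges with exactly one endpoint in $S$. Shadow moat growing on $(G,s)$, for $s:V\to\mathbb{R}_{\ge0}$: continuous process in time $\tau\ge0$ maintaining a forest (initially empty), its components, and $y_S\ge0$ (initially $0$); at time $\tau$ a component $C$ is active iff some $w\in C$ has $s_w>\tau$, and each active $C$ increases $y_C$ at rate $1$; an edge $e$ between different components with $\sum_{S:e\in\delta(S)}y_S=c_e$ is added and the components merge (ties processed by a fixed rule); stop when nothing is active. A boosted instance is $I=(G,t,t^* )$ with $t,t^*:V\to\mathbb{R}_{\ge0}$ and $t^*_v\ge t_v$ for all $v$. Run shadow moat growing on $(G,t^* )$; at each moment $\tau$, each active component $C$ contributes its growth to $y_{\mathrm{base}}$ if some $w\in C$ has $t_w>\tau$, and to $y_{\mathrm{add}}$ otherwise. A boost action $B=(q,\tau)$ with $\tau\ge t^*_q$ yields $\mathrm{WithBoost}(I,B)=(G,t,t^{*\prime})$ with $t^{*\prime}_q=\tau$ and $t^{*\prime}_v=t^*_v$ otherwise. With $(y_{\mathrm{base}},y_{\mathrm{add}})$ for $I$ and $(y'_{\mathrm{base}},y'_{\mathrm{add}})$ for $\mathrm{WithBoost}(I,B)$: $\mathrm{Win}(I,B)=y_{\mathrm{base}}-y'_{\mathrm{base}}$, $\mathrm{Loss}(I,B)=y'_{\mathrm{add}}-y_{\mathrm{add}}$.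 *)

From HB Require Import structures.
From mathcomp Require Import all_boot all_order all_algebra.
From mathcomp Require Import reals.
Set Implicit Arguments. Unset Strict Implicit. Unset Printing Implicit Defensive.
Import Order.TTheory GRing.Theory Num.Theory.
Local Open Scope ring_scope.

Section MoatGrowing.
Variables (R : realType) (V E : finType).
Variables (src dst : E -> V) (c : E -> R).

Definition cut (S : {set V}) (e : E) : bool := (src e \in S) != (dst e \in S).

Definition load (y : {ffun {set V} -> R}) (e : E) : R :=
  \sum_(S : {set V} | cut S e) y S.

Definition adjF (F : {set E}) : rel V := fun x z =>
  [exists e in F, ((src e == x) && (dst e == z)) || ((src e == z) && (dst e == x))].

Definition comp (F : {set E}) (v : V) : {set V} := [set u | connect (adjF F) v u].
Definition comps (F : {set E}) : {set {set V}} := [set comp F v | v : V].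

Definition crossing (F : {set E}) (e : E) : bool := comp F (src e) != comp F (dst e).
Definition tight (y : {ffun {set V} -> R}) (e : E) : bool := load y e == c e.

(* add every tight edge between different components; ties are processed by
   the fixed rule "in the order of enum E" *)
Definition addTight (y : {ffun {set V} -> R}) (F : {set E}) : {set E} :=
  foldl (fun F e => if crossing F e && tight y e then e |: F else F) F (enum E).

Definition activeAt (s : V -> R) (tm : R) (C : {set V}) : bool :=
  [exists w in C, tm < s w].

Definition seqmin (l : seq R) : R := foldr Num.min (head 0 l) l.

Record mstate := MS {
  ms_time : R;
  ms_F : {set E};
  ms_y : {ffun {set V} -> R};
  ms_base : R;
  ms_add : R
}.

(* One event-to-event step of shadow moat growing on (G, ts), with the
   base/additional accounting w.r.t. tb (ts = t*, tb = t). *)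
Definition step (ts tb : V -> R) (st : mstate) : mstate :=
  let tm := ms_time st in
  let y := ms_y st in
  let F := addTight y (ms_F st) in
  let act := activeAt ts tm in
  let rate (e : E) : nat := (act (comp F (src e)) : nat) + (act (comp F (dst e)) : nat) in
  if ~~ [exists v, act (comp F v)] then MS tm F y (ms_base st) (ms_add st) else
  let cands :=
    [seq ts w - tm | w <- enum V & tm < ts w] ++
    [seq tb w - tm | w <- enum V & tm < tb w] ++
    [seq (c e - load y e) / (rate e)%:R | e <- enum E & crossing F e && (0 < rate e)%N] in
  let d := seqmin cands in
  let y' := [ffun S => if (S \in comps F) && act S then y S + d else y S] in
  let nb := #|[set C in comps F | act C && activeAt tb tm C]| in
  let na := #|[set C in comps F | act C && ~~ activeAt tb tm C]| in
  MS (tm + d) F y' (ms_base st + d * nb%:R) (ms_add st + d * na%:R).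

Definition init_state : mstate := MS 0 set0 [ffun => 0] 0 0.

(* The number of event steps is at most 2|V| (threshold times) + |V|-1
   (merges), plus one final step detecting that nothing is active. *)
Definition run (ts tb : V -> R) : mstate :=
  iter (3 * #|V|).+1 (step ts tb) init_state.

Definition y_base (t tstar : V -> R) : R := ms_base (run tstar t).
Definition y_add (t tstar : V -> R) : R := ms_add (run tstar t).

Definition boost (tstar : V -> R) (q : V) (tau : R) : V -> R :=
  fun v => if v == q then tau else tstar v.

Definition Win (t tstar : V -> R) (q : V) (tau : R) : R :=
  y_base t tstar - y_base t (boost tstar q tau).
Definition Loss (t tstar : V -> R) (q : V) (tau : R) : R :=
  y_add t (boost tstar q tau) - y_add t tstar.

End MoatGrowing.

(* Run both moat-growing processes (with t* and with the boosted t*') side by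
   side in continuous time s.  As long as both are running, the boosted run is
   ahead: every component of the original forest lies inside a component of
   the boosted forest, and on every edge crossing the boosted forest the
   original load is at most the boosted load (so an edge that gets tight in
   the original run is already inside a boosted component).  A boosted
   component growing into y_add at time s is either the component of q, which
   can happen only while s < tau, or it contains a vertex w <> q active at s;
   then the original component of w is active and, being smaller, does not
   grow into y_base either.  Hence the boosted y_add grows at most one unit
   faster than the original one, and only before tau, so
   y_add' - y_add <= min(s, tau) <= tau at all times. *)
From mathcomp Require Import all_boot all_order all_algebra.
From mathcomp Require Import reals.
From mathcomp Require Import lra zify.
From Pilot Require Import Defs.
Import Order.TTheory GRing.Theory Num.Theory.
Local Open Scope ring_scope.
Set Implicit Arguments. Unset Strict Implicit. Unset Printing Implicit Defensive.

Lemma card_eq_and (T : finType) (P : pred T) x : #|[set S | (S == x) && P S]| = P x.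
Proof.
case Px: (P x) => /=; last first.
  apply/eqP; rewrite cards_eq0; apply/eqP/setP => S; rewrite !inE.
  by case: eqP => // ->; rewrite Px.
by rewrite -(cards1 x); apply: eq_card => S; rewrite !inE; case: eqP => // ->.
Qed.

Section ForestComponents.
Variables (V E : finType) (src dst : E -> V).
Local Notation adj F := (adjF src dst F).
Local Notation comp F := (comp src dst F).
Local Notation comps F := (comps src dst F).
Local Notation crossing := (crossing src dst).
Implicit Types (F : {set E}) (C : {set V}).

Lemma adjF_sym F : symmetric (adj F).
Proof. by move=> x z; apply: eq_existsb => e; rewrite orbC. Qed.

Lemma connect_adjF_sym F : connect_sym (adj F).
Proof. exact/sym_connect_sym/adjF_sym. Qed.

Lemma eq_comp F u v : (comp F u == comp F v) = connect (adj F) u v.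
Proof.
apply/eqP/idP => [eq_uv|conn_uv]; last first.
  by apply/setP => w; rewrite !inE (same_connect (connect_adjF_sym F) conn_uv).
have : u \in comp F u by rewrite inE connect0.
by rewrite eq_uv inE connect_adjF_sym.
Qed.

Lemma mem_comp F u v : (u \in comp F v) = (comp F u == comp F v).
Proof. by rewrite inE eq_comp connect_adjF_sym. Qed.

Lemma mem_comp_refl F v : v \in comp F v.
Proof. by rewrite inE connect0. Qed.

Lemma cut_comp F v e :
  cut src dst (comp F v) e = ((comp F (src e) == comp F v) != (comp F (dst e) == comp F v)).
Proof. by rewrite /cut !mem_comp. Qed.

Lemma not_crossing_mem F e : e \in F -> ~~ crossing F e.
Proof.
move=> eF; rewrite negbK eq_comp; apply: connect1.
by apply/existsP; exists e; rewrite eF !eqxx.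
Qed.

Definition finer F F' := forall u v, connect (adj F) u v -> connect (adj F') u v.

Lemma finer_edges F F' :
  (forall e, e \in F -> connect (adj F') (src e) (dst e)) -> finer F F'.
Proof.
move=> conn_F; apply: connect_sub => x z /existsP [e /andP [eF]].
case/orP=> /andP [/eqP <- /eqP <-]; first exact: conn_F.
by rewrite connect_adjF_sym; apply: conn_F.
Qed.

Lemma finer_subset F F' : F \subset F' -> finer F F'.
Proof.
move=> sFF'; apply: finer_edges => e eF; apply: connect1.
by apply/existsP; exists e; rewrite (subsetP sFF' _ eF) !eqxx.
Qed.

Lemma finer_trans F1 F2 F3 : finer F1 F2 -> finer F2 F3 -> finer F1 F3.
Proof. by move=> f12 f23 u v /f12 /f23. Qed.

Lemma finer_mem_comp F F' u v : finer F F' -> u \in comp F v -> u \in comp F' v.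
Proof. by move=> fFF'; rewrite !inE; apply: fFF'. Qed.

Lemma finer_crossing F F' e : finer F F' -> crossing F' e -> crossing F e.
Proof. by move=> fFF'; rewrite /Defs.crossing !eq_comp; apply: contra; apply: fFF'. Qed.

(* The component of F' containing a component C of a finer forest. *)
Definition merge_comp F' C : {set V} := \bigcup_(v in C) comp F' v.

Lemma merge_comp_comp F F' v : finer F F' -> merge_comp F' (comp F v) = comp F' v.
Proof.
move=> fFF'; apply/setP => w; apply/bigcupP/idP => [[u uv wu]|wv].
  rewrite mem_comp in wu; rewrite mem_comp (eqP wu) eq_comp.
  by apply: fFF'; rewrite -eq_comp -mem_comp.
by exists v; rewrite ?mem_comp_refl.
Qed.

Lemma comps_finer F F' : finer F F' -> comps F' = merge_comp F' @: comps F.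
Proof.
move=> fFF'; apply/setP => C; apply/imsetP/imsetP => [[v _ ->]|[_ /imsetP [v _ ->] ->]].
  by exists (comp F v); [apply: imset_f | rewrite merge_comp_comp].
by exists v => //; rewrite merge_comp_comp.
Qed.

Lemma leq_card_comps_finer F F' : finer F F' -> (#|comps F'| <= #|comps F|)%N.
Proof. by move=> fFF'; rewrite (comps_finer fFF') leq_imset_card. Qed.

Lemma ltn_card_comps_merge F F' e : finer F F' -> crossing F e -> ~~ crossing F' e ->
  (#|comps F'| < #|comps F|)%N.
Proof.
move=> fFF' cross_e /negPn/eqP merged.
rewrite (comps_finer fFF') ltn_neqAle leq_imset_card andbT.
apply/negP => /imset_injP inj; move/eqP: cross_e; apply.
by apply: inj; rewrite ?imset_f // !merge_comp_comp.
Qed.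

End ForestComponents.

Section Duals.
Variables (R : realType) (V E : finType) (src dst : E -> V) (c : E -> R).
Local Notation comp F := (comp src dst F).
Local Notation comps F := (comps src dst F).
Local Notation crossing := (crossing src dst).
Local Notation cut := (cut src dst).
Local Notation load := (load src dst).
Local Notation tight := (tight src dst c).
Local Notation addTight := (addTight src dst c).
Implicit Types (F : {set E}) (y : {ffun {set V} -> R}).

Lemma foldl_addTight_spec y (l : seq E) F :
  let F' := foldl (fun F e => if crossing F e && tight y e then e |: F else F) F l in
  [/\ F \subset F', (forall e, e \in l -> crossing F' e -> ~~ tight y e) &
      (forall e, e \in F' -> (e \in F) || tight y e)].
Proof.
elim: l F => [|a l IHl] F /=; first by split=> // e ->.
set F1 := if _ then _ else _; have [sF1 tight_l new_l] := IHl F1.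
have sF : F \subset F1 by rewrite /F1; case: ifP => // _; apply: subsetUr.
split; first exact: subset_trans sF sF1.
- move=> e /predU1P [->|]; last exact: tight_l.
  move/(finer_crossing (finer_subset sF1)); rewrite /F1.
  case: ifP => [_|not_added cross_a].
    by rewrite (negPf (not_crossing_mem src dst (setU11 a F))).
  by rewrite cross_a /= in not_added; rewrite not_added.
- move=> e /new_l /orP [|->]; last by rewrite orbT.
  rewrite /F1; case: ifP => [/andP [_ tight_a]|_ -> //].
  by case/setU1P => [->|->]; rewrite ?tight_a ?orbT.
Qed.

Lemma addTight_subset y F : F \subset addTight y F.
Proof. by have [] := foldl_addTight_spec y (enum E) F. Qed.

Lemma addTight_crossing y F e : crossing (addTight y F) e -> ~~ tight y e.
Proof. by have [_ + _] := foldl_addTight_spec y (enum E) F; apply; rewrite mem_enum. Qed.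

Lemma mem_addTight y F e : e \in addTight y F -> (e \in F) || tight y e.
Proof. by have [_ _] := foldl_addTight_spec y (enum E) F; apply. Qed.

Lemma load_grow y F (P : pred {set V}) (d : R) e :
  load [ffun S => if (S \in comps F) && P S then y S + d else y S] e =
  load y e + d * (#|[set S in comps F | P S && cut S e]|)%:R.
Proof.
rewrite /Defs.load.
have -> : \sum_(S | cut S e) [ffun S => if (S \in comps F) && P S then y S + d else y S] S
   = \sum_(S | cut S e) (y S + d * ((S \in comps F) && P S : nat)%:R).
  by apply: eq_bigr => S _; rewrite ffunE; case: ifP => _; rewrite ?mulr1 ?mulr0 ?addr0.
rewrite big_split /= -mulr_sumr -natr_sum; congr (_ + d * _%:R).
rewrite -sum1_card big_mkcond /= [RHS]big_mkcond /=; apply: eq_bigr => S _.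
by rewrite inE; case: (cut S e); case: (S \in comps F); case: (P S).
Qed.

Lemma load0 e : load [ffun => 0 : R] e = 0.
Proof. by rewrite /Defs.load big1 // => S _; rewrite ffunE. Qed.

Lemma card_cut_crossing F (P : pred {set V}) e : crossing F e ->
  #|[set S in comps F | P S && cut S e]| = (P (comp F (src e)) + P (comp F (dst e)))%N.
Proof.
move=> cross_e.
have -> : [set S in comps F | P S && cut S e] =
    [set S | (S == comp F (src e)) && P S] :|: [set S | (S == comp F (dst e)) && P S].
  apply/setP => S; rewrite !inE; apply/andP/orP => [[/imsetP [v _ ->] /andP [Pv]]|].
    rewrite cut_comp ![comp F v == _]eq_sym Pv !andbT.
    by case: (comp F (src e) == comp F v); case: (comp F (dst e) == comp F v); auto.
  by case=> /andP [/eqP -> PS]; rewrite PS imset_f //= cut_comp eqxx;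
    [rewrite [comp F (dst e) == _]eq_sym (negPf cross_e) | rewrite (negPf cross_e)].
rewrite cardsU !card_eq_and -[RHS]subn0; congr (_ - _)%N.
apply/eqP; rewrite cards_eq0; apply/eqP/setP => S; rewrite !inE.
apply/negP => /andP [/andP [/eqP -> _] /andP [/eqP eq_src _]].
by rewrite /Defs.crossing eq_src eqxx in cross_e.
Qed.

End Duals.

Section SeqMin.
Variable R : realType.

Lemma foldr_min_le (a : R) l x : x \in l -> foldr Num.min a l <= x.
Proof.
elim: l => //= b l IHl /predU1P [->|/IHl le_x]; first by rewrite ge_min lexx.
by rewrite ge_min le_x orbT.
Qed.

Lemma foldr_min_mem (a : R) l : foldr Num.min a l \in a :: l.
Proof.
elim: l => [|b l IHl] /=; first exact: mem_head.
rewrite minEle; case: ifP => _; first by rewrite !inE eqxx orbT.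
by move: IHl; rewrite !inE => /orP [->|->]; rewrite ?orbT.
Qed.

Lemma seqmin_le (l : seq R) x : x \in l -> seqmin l <= x.
Proof. exact: foldr_min_le. Qed.

Lemma seqmin_mem (l : seq R) : l != [::] -> seqmin l \in l.
Proof.
case: l => // a l _; have := foldr_min_mem a (a :: l).
by rewrite /seqmin /= inE => /orP [/eqP ->|//]; apply: mem_head.
Qed.

End SeqMin.

Section OneRun.
Variables (R : realType) (V E : finType) (src dst : E -> V) (c : E -> R).
Hypothesis c_ge0 : forall e, 0 <= c e.
Variables (ts tb : V -> R).
Local Notation comp F := (comp src dst F).
Local Notation crossing := (crossing src dst).
Local Notation comps := (comps src dst).
Local Notation cut := (cut src dst).
Local Notation load := (load src dst).
Local Notation tight := (tight src dst c).
Local Notation addTight := (addTight src dst c).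
Implicit Types (F : {set E}) (C : {set V}).

(* Step k runs from [time k] to [time k.+1]; during it the components of
   [tforest k] grow, the load of e at rate [growth k e], y_add at rate
   [addrate k]. *)
Definition state k := iter k (step src dst c ts tb) (init_state R V E).
Definition time k := ms_time (state k).
Definition dual k := ms_y (state k).
Definition forest k := ms_F (state k).
Definition tforest k := addTight (dual k) (forest k).
Definition active k := activeAt ts (time k).
Definition running k := [exists v, active k (comp (tforest k) v)].
Definition rate k e : nat :=
  (active k (comp (tforest k) (src e)) : nat) + (active k (comp (tforest k) (dst e)) : nat).
Definition gaps k :=
    [seq ts w - time k | w <- enum V & time k < ts w] ++
    [seq tb w - time k | w <- enum V & time k < tb w] ++
    [seq (c e - load (dual k) e) / (rate k e)%:R
       | e <- enum E & crossing (tforest k) e && (0 < rate k e)%N].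
Definition delta k := if running k then seqmin (gaps k) else 0.
Definition growth k e : R :=
  if running k then (#|[set S in comps (tforest k) | active k S && cut S e]|)%:R else 0.
Definition nadd k := #|[set C in comps (tforest k) | active k C && ~~ activeAt tb (time k) C]|.
Definition addrate k : R := if running k then (nadd k)%:R else 0.
Definition yadd k := ms_add (state k).

Lemma stepE k :
  [/\ time k.+1 = time k + delta k, forest k.+1 = tforest k,
      dual k.+1 = (if running k then
                     [ffun S => if (S \in comps (tforest k)) && active k S
                                then dual k S + delta k else dual k S]
                   else dual k)
    & yadd k.+1 = yadd k + delta k * addrate k].
Proof.
rewrite /time /forest /dual /yadd.
have -> : state k.+1 = step src dst c ts tb (state k) by rewrite /state iterS.
rewrite /step /= -/(time k) -/(dual k) -/(forest k) -/(tforest k) -/(active k) -/(rate k).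
rewrite -/(running k) -/(gaps k) -/(nadd k) /delta /addrate.
by case run_k: (running k) => /=; split; rewrite ?mulr0 ?addr0.
Qed.

Lemma time0 : time 0 = 0. Proof. by []. Qed.
Lemma dual0 : dual 0 = [ffun => 0]. Proof. by []. Qed.
Lemma yadd0 : yadd 0 = 0. Proof. by []. Qed.

Lemma runningE k : running k = [exists w, time k < ts w].
Proof.
apply/existsP/existsP => [[v /existsP [w /andP [_ h]]]|[w h]]; first by exists w.
by exists w; apply/existsP; exists w; rewrite mem_comp_refl.
Qed.

Lemma load_dualS k e : load (dual k.+1) e = load (dual k) e + delta k * growth k e.
Proof.
have [_ _ -> _] := stepE k; rewrite /growth /delta.
by case: (running k); [apply: load_grow | rewrite mulr0 addr0].
Qed.

Lemma growth_crossing k e : running k -> crossing (tforest k) e -> growth k e = (rate k e)%:R.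
Proof. by move=> run_k cr; rewrite /growth run_k card_cut_crossing. Qed.

Lemma growth_ge0 k e : 0 <= growth k e.
Proof. by rewrite /growth; case: (running k). Qed.

Lemma gaps_neq_nil k : running k -> gaps k != [::].
Proof.
rewrite runningE => /existsP [w h]; rewrite /gaps.
have : ts w - time k \in [seq ts w - time k | w <- enum V & time k < ts w].
  by apply: map_f; rewrite mem_filter h mem_enum.
by case: [seq _ | _ <- _ & _].
Qed.

Lemma crossing_forest k e : crossing (tforest k) e -> crossing (forest k) e.
Proof. exact/finer_crossing/finer_subset/addTight_subset. Qed.

Lemma load_lt_of_le_forest k e :
  (forall e, crossing (forest k) e -> load (dual k) e <= c e) ->
  crossing (tforest k) e -> load (dual k) e < c e.
Proof.
move=> le_cost cr; rewrite lt_neqAle le_cost ?crossing_forest // andbT.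
exact: (addTight_crossing cr).
Qed.

Lemma load_le_cost k : forall e, crossing (forest k) e -> load (dual k) e <= c e.
Proof.
elim: k => [|k IH] e.
  by rewrite dual0 load0.
have [_ -> _ _] := stepE k => cr; rewrite load_dualS.
have lt := load_lt_of_le_forest IH cr.
case run_k: (running k); last by rewrite /delta run_k mul0r addr0 ltW.
rewrite growth_crossing //.
case r0: (rate k e == 0)%N; first by rewrite (eqP r0) mulr0 addr0 ltW.
have rp : (0 < rate k e)%N by rewrite lt0n r0.
have : delta k <= (c e - load (dual k) e) / (rate k e)%:R.
  rewrite /delta run_k; apply: seqmin_le; rewrite /gaps !mem_cat; apply/or3P; apply: Or33.
  by apply: map_f; rewrite mem_filter cr rp mem_enum.
rewrite ler_pdivlMr ?ltr0n // => h; rewrite -lerBrDl; exact: h.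
Qed.

Lemma load_lt_cost k e : crossing (tforest k) e -> load (dual k) e < c e.
Proof. exact: load_lt_of_le_forest (@load_le_cost k). Qed.

Lemma gap_gt0 k x : x \in gaps k -> 0 < x.
Proof.
rewrite /gaps !mem_cat => /or3P [] /mapP [z]; rewrite mem_filter.
- by case/andP => h _ ->; rewrite subr_gt0.
- by case/andP => h _ ->; rewrite subr_gt0.
- case/andP => /andP [cr r] _ ->.
  by rewrite divr_gt0 ?ltr0n // subr_gt0 load_lt_cost.
Qed.

Lemma delta_gt0 k : running k -> 0 < delta k.
Proof. by move=> run_k; rewrite /delta run_k; apply/gap_gt0/seqmin_mem/gaps_neq_nil. Qed.

Lemma delta_ge0 k : 0 <= delta k.
Proof. by case run_k: (running k); [exact/ltW/delta_gt0 | rewrite /delta run_k]. Qed.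

Lemma delta_le_ts k w : time k < ts w -> delta k <= ts w - time k.
Proof.
move=> h; rewrite /delta; case: ifP => _; last by rewrite subr_ge0 ltW.
apply: seqmin_le; rewrite /gaps !mem_cat; apply/or3P; apply: Or31.
by apply: map_f; rewrite mem_filter h mem_enum.
Qed.

Lemma delta_le_tb k w : time k < tb w -> delta k <= tb w - time k.
Proof.
move=> h; rewrite /delta; case: ifP => _; last by rewrite subr_ge0 ltW.
apply: seqmin_le; rewrite /gaps !mem_cat; apply/or3P; apply: Or32.
by apply: map_f; rewrite mem_filter h mem_enum.
Qed.

Lemma load_next_le k e :
  crossing (tforest k) e -> load (dual k) e + delta k * growth k e <= c e.
Proof. by move=> cr; rewrite -load_dualS; apply: load_le_cost; have [_ -> _ _] := stepE k. Qed.

Lemma load_within_step k e s : crossing (tforest k) e -> time k <= s ->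
  (s < time k.+1 \/ ~~ running k) ->
  load (dual k) e + (s - time k) * growth k e < c e.
Proof.
move=> cr h1 [h2|halt_k]; last by rewrite /growth (negPf halt_k) mulr0 addr0 load_lt_cost.
have lt := load_lt_cost cr; have le := load_next_le cr.
case r0: (growth k e == 0); first by rewrite (eqP r0) mulr0 addr0.
have rp : 0 < growth k e by rewrite lt_neqAle eq_sym r0 growth_ge0.
have [eT _ _ _] := stepE k; rewrite eT in h2.
have h3 : (s - time k) * growth k e < delta k * growth k e by rewrite ltr_pM2r //; lra.
lra.
Qed.

Lemma timeS k : time k.+1 = time k + delta k. Proof. by have [] := stepE k. Qed.
Lemma forestS k : forest k.+1 = tforest k. Proof. by have [] := stepE k. Qed.

Lemma time_leS k : time k <= time k.+1.
Proof. by rewrite timeS lerDl delta_ge0. Qed.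

Lemma lt_ts_within_step k s w : time k <= s -> s < time k.+1 -> (time k < ts w) = (s < ts w).
Proof.
move=> h1 h2; apply/idP/idP => h; last by apply: le_lt_trans h.
have := delta_le_ts h; rewrite timeS in h2; lra.
Qed.

Lemma lt_tb_within_step k s w : time k <= s -> s < time k.+1 -> (time k < tb w) = (s < tb w).
Proof.
move=> h1 h2; apply/idP/idP => h; last by apply: le_lt_trans h.
have := delta_le_tb h; rewrite timeS in h2; lra.
Qed.

Lemma halted_step k :
  ~~ running k -> [/\ ~~ running k.+1, yadd k.+1 = yadd k & time k.+1 = time k].
Proof.
move=> halt_k; have [eT _ _ eA] := stepE k.
have eT' : time k.+1 = time k by rewrite eT /delta (negPf halt_k) addr0.
split => //; last by rewrite eA /delta (negPf halt_k) mul0r addr0.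
by move: halt_k; rewrite !runningE eT'.
Qed.

Lemma halted_after k m : ~~ running k -> (k <= m)%N ->
  [/\ ~~ running m, yadd m = yadd k & time m = time k].
Proof.
move=> halt_k; elim: m => [|m IH]; first by rewrite leqn0 => /eqP kz; subst k; split.
rewrite leq_eqVlt => /orP [/eqP <-|]; first by split.
rewrite ltnS => /IH [halt_m eA eT]; have [] := halted_step halt_m.
by move=> ? -> ->.
Qed.

Lemma halted_ge k w : ~~ running k -> ts w <= time k.
Proof. by rewrite runningE negb_exists => /forallP /(_ w); rewrite -leNgt. Qed.

Lemma eq_activeAt (P : V -> R) t1 t2 C :
  (forall w, (t1 < P w) = (t2 < P w)) -> activeAt P t1 C = activeAt P t2 C.
Proof. by move=> eq_t; apply: eq_existsb => w; rewrite eq_t. Qed.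

Lemma active_within_step k s C : time k <= s -> s < time k.+1 -> active k C = activeAt ts s C.
Proof. by move=> ge_s lt_s; apply: eq_activeAt => w; apply: lt_ts_within_step. Qed.

Definition nadd_at F s := #|[set C in comps F | activeAt ts s C && ~~ activeAt tb s C]|.

Lemma addrate_nadd_at k s : time k <= s -> (running k -> s < time k.+1) ->
  addrate k = (nadd_at (tforest k) s)%:R.
Proof.
move=> ge_s lt_s; rewrite /addrate; case: (boolP (running k)) => [run_k|halt_k].
  have {}lt_s := lt_s run_k; congr (_%:R); rewrite /nadd /active.
  apply: eq_card => C; rewrite !inE.
  by rewrite (eq_activeAt _ (fun w => lt_ts_within_step w ge_s lt_s))
     (eq_activeAt _ (fun w => lt_tb_within_step w ge_s lt_s)).
apply/esym/eqP; rewrite pnatr_eq0 cards_eq0; apply/eqP/setP => C; rewrite !inE.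
apply/negP => /andP [_ /andP [/existsP [w /andP [_ lt_w]] _]].
by have := halted_ge w halt_k; lra.
Qed.

(* Every step of a running process ends at an event: a threshold ts w or tb w
   is reached, or a crossing edge becomes tight, and it is merged at the start
   of the next step.  So the following potential strictly decreases. *)
Definition pending k := (#|[set w | (time k < ts w)%R]| + #|[set w | (time k < tb w)%R]|)%N.
Definition ncomps k := #|comps (forest k)|.
Definition tight_crossing k := [exists e, crossing (forest k) e && tight (dual k) e].
Definition potential k := (pending k + ncomps k + ~~ tight_crossing k)%N.

Lemma card_comps_tforest k : (#|comps (tforest k)| + tight_crossing k <= ncomps k)%N.
Proof.
have fin : finer src dst (forest k) (tforest k) by apply/finer_subset/addTight_subset.
case: (boolP (tight_crossing k)) => [/existsP [e /andP [cr ti]]|_].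
  rewrite addn1; apply: (ltn_card_comps_merge fin cr).
  by apply: contraL ti => /addTight_crossing.
by rewrite addn0 leq_card_comps_finer.
Qed.

Lemma subset_pendingS k (P : V -> R) : [set w | time k.+1 < P w] \subset [set w | time k < P w].
Proof. by apply/subsetP => w; rewrite !inE => h; apply: le_lt_trans (time_leS k) h. Qed.

Lemma proper_pendingS k (P : V -> R) w : time k < P w -> time k.+1 = P w ->
  (#|[set w | (time k.+1 < P w)%R]| < #|[set w | (time k < P w)%R]|)%N.
Proof.
move=> h1 h2; apply: proper_card; apply/properP; split; first exact: subset_pendingS.
by exists w; rewrite !inE ?h1 // h2 ltxx.
Qed.

Lemma potential_decr k : running k -> (potential k.+1 < potential k)%N.
Proof.
move=> run_k; have := card_comps_tforest k; rewrite /potential /ncomps forestS.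
have s1 := subset_leq_card (subset_pendingS k ts).
have s2 := subset_leq_card (subset_pendingS k tb).
have := seqmin_mem (gaps_neq_nil run_k).
have dmem : delta k = seqmin (gaps k) by rewrite /delta run_k.
rewrite -dmem /gaps !mem_cat => /or3P [] /mapP [z]; rewrite mem_filter.
- case/andP => h _ eq; have e1 : time k.+1 = ts z by rewrite timeS eq addrC subrK.
  have := proper_pendingS h e1.
  rewrite /pending; case: (tight_crossing k); case: (tight_crossing k.+1) => /=; lia.
- case/andP => h _ eq; have e1 : time k.+1 = tb z by rewrite timeS eq addrC subrK.
  have := proper_pendingS h e1.
  rewrite /pending; case: (tight_crossing k); case: (tight_crossing k.+1) => /=; lia.
- case/andP => /andP [cr rp] _ eq.
  have ti : tight_crossing k.+1.
    apply/existsP; exists z; rewrite forestS cr /= /Defs.tight load_dualS growth_crossing // eq.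
    rewrite mulrAC -mulrA divff ?mulr1 ?pnatr_eq0 -?lt0n // addrC subrK //.
  rewrite ti /pending; case: (tight_crossing k) => /=; lia.
Qed.

Lemma potential_ge2 k : running k -> (2 <= potential k)%N.
Proof.
rewrite runningE => /existsP [w h].
have h1 : (0 < #|[set w | (time k < ts w)%R]|)%N by apply/card_gt0P; exists w; rewrite inE.
have h2 : (0 < ncomps k)%N by apply/card_gt0P; exists (comp (forest k) w); apply/imsetP; exists w.
rewrite /potential /pending; lia.
Qed.

Lemma potential0 : (potential 0 <= 3 * #|V| + 1)%N.
Proof.
rewrite /potential /pending; set n := #|V|.
have h1 : (#|[set w | (time 0 < ts w)%R]| <= n)%N := max_card _.
have h2 : (#|[set w | (time 0 < tb w)%R]| <= n)%N := max_card _.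
have h3 : (ncomps 0 <= n)%N := leq_imset_card _ _.
case: (tight_crossing 0) => /=; lia.
Qed.

Lemma running_prev k j : running k -> (j <= k)%N -> running j.
Proof.
move=> run_k jk; case: (boolP (running j)) => // halt_k.
by have [+ _ _] := halted_after halt_k jk; rewrite run_k.
Qed.

Lemma potential_add_le k : running k -> (potential k + k <= potential 0)%N.
Proof.
elim: k => [|k IHk] run_k; first by rewrite addn0.
have run_k' := running_prev run_k (leqnSn k).
by have := IHk run_k'; have := potential_decr run_k'; lia.
Qed.

Lemma running_lt k : running k -> (k < 3 * #|V|)%N.
Proof.
move=> run_k; have := potential_add_le run_k; have := potential_ge2 run_k.
by have := potential0; lia.
Qed.

Lemma run_yadd : ms_add (run src dst c ts tb) = yadd (3 * #|V|).+1.
Proof. by []. Qed.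

End OneRun.

(* Integrating [n2 <= n1 + (s < tau)] over [s, s'] on which the rates are
   constant; [n2] can exceed [n1] only if the whole interval lies before tau. *)
Lemma le_add_rate_step (R : realDomainType) (s s' tau n1 n2 : R) : s <= s' -> 0 <= n1 ->
  n2 <= n1 + (s < tau)%R%:R -> (n1 < n2 -> s' <= tau) ->
  (s' - s) * n2 <= (s' - s) * n1 + (Num.min s' tau - Num.min s tau).
Proof.
move=> le_ss' n1_ge0 le_n2 lt_n2; have d_ge0 : 0 <= s' - s by rewrite subr_ge0.
have [le_n21|lt_n12] := leP n2 n1.
  have : Num.min s tau <= Num.min s' tau by rewrite le_min !ge_min le_ss' lexx orbT.
  by have := ler_wpM2l d_ge0 le_n21; lra.
have le_s'_tau := lt_n2 lt_n12.
have lt_s_tau : s < tau by apply/negPn/negP => /negbTE ge_s; rewrite ge_s addr0 in le_n2; lra.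
rewrite lt_s_tau /= in le_n2.
rewrite (min_idPl le_s'_tau) (min_idPl (ltW lt_s_tau)).
by have := ler_wpM2l d_ge0 le_n2; lra.
Qed.

Section Coupling.
Variables (R : realType) (V E : finType) (src dst : E -> V) (c : E -> R).
Hypothesis c_ge0 : forall e, 0 <= c e.
Variables (ts ts' tb : V -> R) (q : V) (tau : R).
Hypothesis ts_le : forall w, ts w <= ts' w.
Hypothesis boost_eq : forall w, w != q -> ts' w = ts w.
Hypothesis boost_q : ts' q = tau.
Hypothesis tau_ge0 : 0 <= tau.
Local Notation comp F := (comp src dst F).
Local Notation crossing := (crossing src dst).
Local Notation comps := (comps src dst).
Local Notation load := (load src dst).
Local Notation finer := (finer src dst).
Local Notation time1 := (time src dst c ts tb).
Local Notation time2 := (time src dst c ts' tb).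
Local Notation running1 := (running src dst c ts tb).
Local Notation running2 := (running src dst c ts' tb).
Local Notation dual1 := (dual src dst c ts tb).
Local Notation dual2 := (dual src dst c ts' tb).
Local Notation forest1 := (tforest src dst c ts tb).
Local Notation forest2 := (tforest src dst c ts' tb).
Local Notation growth1 := (growth src dst c ts tb).
Local Notation growth2 := (growth src dst c ts' tb).
Local Notation yadd1 := (yadd src dst c ts tb).
Local Notation yadd2 := (yadd src dst c ts' tb).
Local Notation addrate1 := (addrate src dst c ts tb).
Local Notation addrate2 := (addrate src dst c ts' tb).
Local Notation nadd_at1 := (nadd_at src dst ts tb).
Local Notation nadd_at2 := (nadd_at src dst ts' tb).

Lemma active_boost F F' s v : finer F F' ->
  activeAt ts s (comp F v) -> activeAt ts' s (comp F' v).
Proof.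
move=> fin /existsP [w /andP [wv lt_w]]; apply/existsP; exists w.
by rewrite (finer_mem_comp fin wv) (lt_le_trans lt_w (ts_le w)).
Qed.

Lemma boost_add_comp F F' s w : finer F F' -> w != q -> s < ts' w ->
  ~~ activeAt tb s (comp F' w) ->
  comp F' w \in merge_comp src dst F' @:
                  [set C in comps F | activeAt ts s C && ~~ activeAt tb s C].
Proof.
move=> fin wq lt_w not_base; apply/imsetP; exists (comp F w); last by rewrite merge_comp_comp.
rewrite inE; apply/and3P; split; first by apply/imsetP; exists w.
  by apply/existsP; exists w; rewrite mem_comp_refl -(boost_eq wq).
apply: contra not_base => /existsP [u /andP [uw lt_u]]; apply/existsP; exists u.
by rewrite lt_u (finer_mem_comp fin uw).
Qed.

Lemma nadd_at_boost F F' s : finer F F' -> (nadd_at2 F' s <= nadd_at1 F s + (s < tau)%R)%N.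
Proof.
move=> fin; rewrite /nadd_at; set N1 := [set C in comps F | _].
have sub : [set C in comps F' | activeAt ts' s C && ~~ activeAt tb s C] \subset
    merge_comp src dst F' @: N1 :|: (if s < tau then [set comp F' q] else set0).
  apply/subsetP => C /setIdP [/imsetP [v _ ->] /andP [/existsP [w /andP [wv lt_w]]]].
  rewrite mem_comp in wv; rewrite -(eqP wv) => not_base.
  have [eq_wq|wq] := eqVneq w q; last by rewrite inE boost_add_comp.
  by move: lt_w; rewrite eq_wq boost_q => ->; rewrite in_setU set11 orbT.
apply: (leq_trans (subset_leq_card sub)); rewrite cardsU.
apply: (leq_trans (leq_subr _ _)); apply: leq_add; first exact: leq_imset_card.
by case: (s < tau); rewrite ?cards1 ?cards0.
Qed.

Lemma growth_boost_le k j s e : finer (forest1 k) (forest2 j) ->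
  time1 k <= s -> (running1 k -> s < time1 k.+1) ->
  time2 j <= s -> (running2 j -> s < time2 j.+1) ->
  crossing (forest2 j) e -> growth1 k e <= growth2 j e.
Proof.
move=> fin ge1 lt1 ge2 lt2 cr.
case: (boolP (running1 k)) => [run1|halt1]; last by rewrite /growth (negPf halt1) growth_ge0.
have {}lt1 := lt1 run1.
case: (boolP (running2 j)) => [run2|halt2]; last first.
  move: run1; rewrite runningE => /existsP [w]; rewrite (lt_ts_within_step w ge1 lt1).
  by have := halted_ge w halt2; have := ts_le w; lra.
have {}lt2 := lt2 run2.
rewrite (growth_crossing run1 (finer_crossing fin cr)) (growth_crossing run2 cr) ler_nat /rate.
rewrite !(active_within_step _ ge1 lt1) !(active_within_step _ ge2 lt2).
have le_act v : (activeAt ts s (comp (forest1 k) v) <= activeAt ts' s (comp (forest2 j) v))%N.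
  by case: (boolP (activeAt ts s _)) => // /(active_boost fin) ->.
exact: leq_add.
Qed.

Lemma time2S_le_tau j : time2 j < tau -> time2 j.+1 <= tau.
Proof. by rewrite -boost_q timeS => lt_j; have := delta_le_ts lt_j; lra. Qed.

(* [coupled k j s]: at time s the original run is in its step k and the boosted
   run in its step j, the duals of both current steps being grown up to s. *)
Definition coupled k j s :=
  [/\ [/\ time1 k <= s, running1 k -> s <= time1 k.+1,
          time2 j <= s, running2 j -> s <= time2 j.+1 &
          (k <= 3 * #|V|)%N /\ (j <= 3 * #|V|)%N],
      finer (forest1 k) (forest2 j),
      forall e, crossing (forest2 j) e ->
        load (dual1 k) e + (s - time1 k) * growth1 k e <=
        load (dual2 j) e + (s - time2 j) * growth2 j e &
      yadd2 j + (s - time2 j) * addrate2 j <=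
        yadd1 k + (s - time1 k) * addrate1 k + Num.min s tau].

Definition coupled_strict k j s :=
  [/\ coupled k j s, running1 k -> s < time1 k.+1 & running2 j -> s < time2 j.+1].

Lemma addrate_boost_le k j s : coupled_strict k j s -> addrate2 j <= addrate1 k + (s < tau)%R%:R.
Proof.
move=> [[[ge1 _ ge2 _ _] fin _ _] lt1 lt2].
by rewrite (addrate_nadd_at ge1 lt1) (addrate_nadd_at ge2 lt2) -natrD ler_nat nadd_at_boost.
Qed.

Lemma coupled_advance k j s s' : coupled_strict k j s -> s <= s' ->
  (running1 k -> s' <= time1 k.+1) -> (running2 j -> s' <= time2 j.+1) -> coupled k j s'.
Proof.
move=> cs le_ss' le1 le2; have [[[ge1 _ ge2 _ bnd] fin le_load le_add] lt1 lt2] := cs.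
have d_ge0 : 0 <= s' - s by rewrite subr_ge0.
split => //.
- by split => //; apply: le_trans le_ss'.
- move=> e cr; have := le_load e cr.
  by have := ler_wpM2l d_ge0 (growth_boost_le fin ge1 lt1 ge2 lt2 cr); lra.
have n1_ge0 : 0 <= addrate1 k by rewrite (addrate_nadd_at ge1 lt1) ler0n.
have le_tau : addrate1 k < addrate2 j -> s' <= tau.
  move=> lt_n; have lt_s : s < tau.
    apply/negPn/negP => /negbTE ge_s.
    by have := addrate_boost_le cs; rewrite ge_s addr0; lra.
  have run2 : running2 j.
    case: (boolP (running2 j)) => // halt.
    by move: lt_n; rewrite [addrate2 j]/addrate (negPf halt); lra.
  exact: le_trans (le2 run2) (time2S_le_tau (le_lt_trans ge2 lt_s)).
by have := le_add_rate_step le_ss' n1_ge0 (addrate_boost_le cs) le_tau; lra.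
Qed.

Lemma coupled_event2 k j s :
  coupled k j s -> running2 j -> s = time2 j.+1 -> coupled k j.+1 s.
Proof.
move=> [[ge1 le1 _ _ [kb _]] fin le_load le_add] run2 es; subst s.
have sub : forest2 j \subset forest2 j.+1 by rewrite [forest2 j.+1]/tforest forestS addTight_subset.
have eT := timeS src dst c ts' tb j.
have jb' := running_lt c_ge0 run2.
split.
- by split; [exact: ge1 | exact: le1 | exact: lexx | move=> _; apply: time_leS |].
- exact: finer_trans fin (finer_subset sub).
- move=> e cr; have := le_load e (finer_crossing (finer_subset sub) cr).
  by rewrite subrr mul0r addr0 load_dualS eT; lra.
- have [_ _ _ ->] := stepE src dst c ts' tb j; rewrite subrr mul0r addr0.
  by move: le_add; rewrite eT; lra.
Qed.

Lemma coupled_event1 k j s : coupled k j s -> running1 k -> s = time1 k.+1 ->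
  (running2 j -> s < time2 j.+1) -> coupled k.+1 j s.
Proof.
move=> [[_ _ ge2 le2 [_ jb]] fin le_load le_add] run1 es lt2; subst s.
have eT := timeS src dst c ts tb k.
have kb' := running_lt c_ge0 run1.
split.
- by split; [exact: lexx | move=> _; apply: time_leS | exact: ge2 | exact: le2 |].
- apply: finer_edges => e /mem_addTight; rewrite forestS => /orP [eF|tight_e].
    by apply: fin; rewrite -eq_comp; apply/negPn/not_crossing_mem.
  (* were e crossing the boosted forest, its boosted load would reach c
     strictly inside the current boosted step *)
  rewrite -eq_comp; apply/negPn/negP => cr.
  have lt_load : load (dual2 j) e + (time1 k.+1 - time2 j) * growth2 j e < c e.
    apply: load_within_step => //.
    by case: (boolP (running2 j)) => [/lt2|]; [left | right].
  by move: tight_e (le_load e cr) lt_load; rewrite /Defs.tight load_dualS eT => /eqP; lra.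
- move=> e cr; have := le_load e cr.
  by rewrite subrr mul0r addr0 load_dualS eT; lra.
- have [_ _ _ ->] := stepE src dst c ts tb k; rewrite subrr mul0r addr0.
  by move: le_add; rewrite eT; lra.
Qed.

Lemma coupled_init : coupled_strict 0 0 0.
Proof.
have lt0 P : running src dst c P tb 0 -> 0 < time src dst c P tb 1.
  by move=> run0; rewrite timeS time0 add0r delta_gt0.
split; [split | exact: lt0 | exact: lt0].
- by split; [rewrite time0 | move/lt0/ltW | rewrite time0 | move/lt0/ltW | ].
- by [].
- by move=> e _; rewrite !time0 !dual0 !load0 subrr !mul0r.
- by rewrite !time0 !yadd0 subrr !mul0r !addr0 add0r (min_idPl tau_ge0).
Qed.

Lemma coupled_sync2 k j s : coupled k j s ->
  exists j', [/\ coupled k j' s, (j <= j' <= j.+1)%N,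
                 running2 j -> s = time2 j.+1 -> j' = j.+1 &
                 running2 j' -> s < time2 j'.+1].
Proof.
move=> cpl; have [[_ _ _ le2 _] _ _ _] := cpl.
case: (boolP (running2 j && (s == time2 j.+1))) => [/andP [run2 /eqP es]|not_event].
  exists j.+1; split; [exact: coupled_event2 | by rewrite leqnSn ltnSn | by [] |].
  by move=> run2'; rewrite timeS es ltrDl delta_gt0.
exists j; split => //; first by rewrite leqnn leqnSn.
  by move=> run2 es; move: not_event; rewrite run2 es eqxx.
by move=> run2; rewrite lt_neqAle le2 // andbT; move: not_event; rewrite run2.
Qed.

Lemma coupled_events k j s : coupled k j s -> exists k' j', [/\ coupled_strict k' j' s,
  (k <= k' <= k.+1)%N, (j <= j' <= j.+1)%N,
  running1 k -> s = time1 k.+1 -> k' = k.+1 & running2 j -> s = time2 j.+1 -> j' = j.+1].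
Proof.
move=> cpl; have [j' [cpl' jj' event2 lt2]] := coupled_sync2 cpl.
have [[_ le1 _ _ _] _ _ _] := cpl'.
case: (boolP (running1 k && (s == time1 k.+1))) => [/andP [run1 /eqP es]|not_event].
  exists k.+1, j'; split => //; last by rewrite leqnSn ltnSn.
  split; [exact: coupled_event1 | | exact: lt2].
  by move=> run1'; rewrite timeS es ltrDl delta_gt0.
exists k, j'; split => //.
- split => // run1; rewrite lt_neqAle le1 // andbT.
  by move: not_event; rewrite run1.
- by rewrite leqnn leqnSn.
- by move=> run1 es; move: not_event; rewrite run1 es eqxx.
Qed.

Definition next_event k j : R :=
  if running1 k then (if running2 j then Num.min (time1 k.+1) (time2 j.+1) else time1 k.+1)
  else time2 j.+1.

Lemma next_event_le1 k j : running1 k -> next_event k j <= time1 k.+1.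
Proof. by move=> run1; rewrite /next_event run1; case: (running2 j); rewrite ?ge_min lexx. Qed.

Lemma next_event_le2 k j : running2 j -> next_event k j <= time2 j.+1.
Proof.
by move=> run2; rewrite /next_event run2; case: (running1 k); rewrite ?ge_min lexx ?orbT.
Qed.

Lemma next_event_reached k j : running1 k || running2 j ->
  (running1 k /\ next_event k j = time1 k.+1) \/ (running2 j /\ next_event k j = time2 j.+1).
Proof.
rewrite /next_event; case: (boolP (running1 k)) => run1; case: (boolP (running2 j)) => run2 //= _.
- by rewrite minEle; case: leP; [left | right].
- by left.
- by right.
Qed.

Lemma coupled_step k j s : coupled_strict k j s -> running1 k || running2 j ->
  exists k' j' s', coupled_strict k' j' s' /\ (k + j < k' + j')%N.
Proof.
move=> cs run; have [_ lt1 lt2] := cs.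
have le_s : s <= next_event k j.
  by case: (next_event_reached run) => [[run1 ->]|[run2 ->]]; [exact/ltW/lt1 | exact/ltW/lt2].
have [k' [j' [cs' /andP [kk1 kk2] /andP [jj1 jj2] event1 event2]]] :=
  coupled_events (coupled_advance cs le_s (@next_event_le1 k j) (@next_event_le2 k j)).
exists k', j', (next_event k j); split => //.
by case: (next_event_reached run) => [[run1 /(event1 run1)]|[run2 /(event2 run2)]] ->; lia.
Qed.

Lemma coupled_halted k j s :
  coupled k j s -> ~~ running1 k -> ~~ running2 j -> yadd2 j <= yadd1 k + tau.
Proof.
move=> [_ _ _ le_add] halt1 halt2; move: le_add.
rewrite /addrate (negPf halt1) (negPf halt2) !mulr0 !addr0.
have : Num.min s tau <= tau by rewrite ge_min lexx orbT.
lra.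
Qed.

Lemma coupled_final k j s : coupled_strict k j s ->
  exists k' j', [/\ ~~ running1 k', ~~ running2 j', (k' <= 3 * #|V|)%N, (j' <= 3 * #|V|)%N &
                   yadd2 j' <= yadd1 k' + tau].
Proof.
move: {2}(6 * #|V| - (k + j))%N (leqnn (6 * #|V| - (k + j))) => n.
elim: n k j s => [|n IHn] k j s le_n cs.
all: have [cpl _ _] := cs; have [[_ _ _ _ [kb jb]] _ _ _] := cpl.
all: case: (boolP (running1 k || running2 j)) => [run|]; last first.
all: try by rewrite negb_or => /andP [halt1 halt2]; exists k, j; split => //;
  exact: coupled_halted cpl halt1 halt2.
  by case/orP: run => /(running_lt c_ge0); lia.
have [k' [j' [s' [cs' lt_kj]]]] := coupled_step cs run.
have [[[_ _ _ _ [kb' jb']] _ _ _] _ _] := cs'.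
by apply: (IHn k' j' s' _ cs'); lia.
Qed.

End Coupling.

Theorem mainTheorem14 (R : realType) (V E : finType) (src dst : E -> V) (c : E -> R)
    (t tstar : V -> R) (q : V) (tau : R) :
  (forall e, 0 <= c e) ->
  (forall v, 0 <= t v) ->
  (forall v, t v <= tstar v) ->
  tstar q <= tau ->
  Loss src dst c t tstar q tau <= tau.
Proof.
move=> c_ge0 t_ge0 le_t le_q; set tstar' := boost tstar q tau.
have tau_ge0 : 0 <= tau by have := t_ge0 q; have := le_t q; lra.
have le_boost w : tstar w <= tstar' w by rewrite /tstar' /boost; case: eqP => [->|].
have boost_eq w : w != q -> tstar' w = tstar w by rewrite /tstar' /boost => /negPf ->.
have boost_q : tstar' q = tau by rewrite /tstar' /boost eqxx.
have [k [j [halt1 halt2 le_k le_j le_yadd]]] := coupled_final c_ge0 le_boost boost_eq boost_q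
  tau_ge0 (coupled_init src dst c_ge0 tstar tstar' t tau_ge0).
rewrite /Loss /y_add !run_yadd.
have [_ -> _] := halted_after halt1 (leqW le_k).
have [_ -> _] := halted_after halt2 (leqW le_j).
lra.
Qed.
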